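(* Let $d$ be a positive integer and $p\in[0,1]$. Then every cubic graph $G$ of girth at least $2d+1$ satisfies $$\gamma_e(G)\leq\frac{3}{2}\left(p+e^{-pd}\right)n(G).$$
   Context: All graphs are finite, simple and undirected; $n(G)=|V(G)|$; a graph is cubic if every vertex has degree $3$. For a graph $G$, a set $S\subseteq V(G)$, and vertices $u,v$ with $u\in S$ or $v\in S$, ${\rm dist}_{(G,S)}(u,v)$ is the minimum number of edges of a path $P$ in $G$ between $u$ and $v$ such that $S$ contains exactly one endvertex of $P$ and no internal vertex of $P$, and $\infty$ if no such path exists (so ${\rm dist}_{(G,S)}(u,u)=0$ for $u\in S$). For $u\in V(G)$, $w_{(G,S)}(u)=\sum_{v\in S}(1/2)^{{\rm dist}_{(G,S)}(u,v)-1}$ with $(1/2)^{\infty}=0$. $S$ is an exponential dominating set of $G$ if $w_{(G,S)}(u)\geq 1$ for every $u\in V(G)$, and $\gamma_e(G)$ is the minimum cardinality of an exponential dominating set of $G$. *)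

From mathcomp Require Import all_boot.
From Stdlib Require Import Reals ZArith.

Set Implicit Arguments.
Unset Strict Implicit.
Unset Printing Implicit Defensive.

Section ExpDom.
Variable T : finType.
Variable e : rel T.

Definition simple_graph : Prop := irreflexive e /\ symmetric e.

Definition cubic : Prop := forall x : T, #|[set y | e x y]| = 3%nat.

Definition girth_at_least (g : nat) : Prop :=
  forall c : seq T, uniq c -> (3 <= size c)%nat -> cycle e c -> (g <= size c)%nat.

(* p is a path from u to last u p (vertices u :: p, distinct), such that S
   contains exactly one endvertex and no internal vertex *)
Definition admissible (S : {set T}) (u v : T) (p : seq T) : bool :=
  [&& path e u p, last u p == v, uniq (u :: p),
      #|[set u; v] :&: S| == 1%nat
    & all (fun x => x \notin S) (behead (belast u p))].

Definition has_adm_path (S : {set T}) (u v : T) (k : nat) : bool :=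
  [exists t : k.-tuple T, admissible S u v t].

(* dist_(G,S)(u,v): Some (least length), or None (= infinity).
   A path has fewer than #|T| edges, so searching k < #|T| is exhaustive. *)
Definition distGS (S : {set T}) (u v : T) : option nat :=
  let k := find (has_adm_path S u v) (iota 0 #|T|) in
  if (k < #|T|)%nat then Some k else None.

Definition contrib (d : option nat) : R :=
  match d with
  | None => 0%R
  | Some k => powerRZ (/ 2)%R (Z.of_nat k - 1)%Z
  end.

Definition weightGS (S : {set T}) (u : T) : R :=
  \big[Rplus/0%R]_(v in S) contrib (distGS S u v).

Definition exp_dominating (S : {set T}) : Prop :=
  forall u : T, (1 <= weightGS S u)%R.

Definition exp_dominatingb (S : {set T}) : bool :=
  [forall u : T, if Rle_dec 1 (weightGS S u) then true else false].

(* gamma_e(G): least k such that some exponential dominating set has size k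
   (V(G) itself is exponential dominating, so k <= #|T|). *)
Definition gamma_e : nat :=
  find (fun k => [exists S : {set T}, (#|S| == k) && exp_dominatingb S])
       (iota 0 #|T|.+1).

End ExpDom.

From mathcomp Require Import all_boot order ssralg ssrnum zify Rstruct.
From Stdlib Require Import Reals Lra.

(* For a set [S] and a vertex [u] outside it, give a self-avoiding path of
   length [j] from [u] whose only vertex in [S] is its endpoint the weight
   [2^(1-j)], and consider the potential
     Phi_k = (weights of these paths of length <= k)
             + 2^(1-k) * #(paths of length k avoiding S).
   Then Phi_1 = 3, and Phi_k <= Phi_(k+1) while the ball of radius [k+1]
   around [u] is a tree (girth > 2d): an avoiding path has two continuations
   of half its weight.  In that tree the hitting paths end at distinct
   vertices of [S], so the exponential weight of [u] is at least
   3 - 2^(1-d) * #(paths of length d avoiding S).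
   Probabilistic method: put each vertex into [X] independently with
   probability [p] and add the vertices [u] with
   2^(1-d) * #(paths of length d from u avoiding X) > 2.  The result is
   exponentially dominating, of expected size at most
   p n + 1/2 * n * 2^(1-d) * 3 * 2^(d-1) * (1-p)^d <= 3/2 (p + e^(-pd)) n. *)

Set Implicit Arguments.
Unset Strict Implicit.
Unset Printing Implicit Defensive.

Import GRing.Theory Num.Theory.

Lemma last_take_index (T : eqType) (u x : T) (s : seq T) :
  x \in u :: s -> last u (take (index x (u :: s)) s) = x.
Proof.
rewrite in_cons eq_sym; case: (eqVneq u x) => [-> | ux xs] /=.
  by rewrite eqxx take0.
by rewrite (negbTE ux) (take_nth x) ?index_mem // last_rcons nth_index.
Qed.

Lemma INR_expn m n : INR (expn m n) = (INR m ^ n)%R.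
Proof. by elim: n => // n IH; rewrite expnS mult_INR IH. Qed.

Lemma pow_one_minus_le_exp (p : R) (d : nat) :
  (0 <= p <= 1)%R -> ((1 - p) ^ d <= exp (- (p * INR d)))%R.
Proof.
move=> p01; apply: Rle_trans (_ : exp (- p) ^ d <= _)%R.
  by apply: pow_incr; have := exp_ineq1_le (- p); lra.
rewrite -Rpower_pow; last exact: exp_pos.
rewrite /Rpower ln_exp; right; congr exp; ring.
Qed.

Lemma sumR_le (I : eqType) (r : seq I) (P : pred I) (F G : I -> R) :
  (forall i, i \in r -> P i -> F i <= G i)%R ->
  (\big[Rplus/0]_(i <- r | P i) F i <= \big[Rplus/0]_(i <- r | P i) G i)%R.
Proof.
move=> FG; rewrite !(big_seq_cond P).
by apply/RleP/ler_sum => i /andP[ir Pi]; apply/RleP/FG.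
Qed.

Lemma sumR_ge0 (I : Type) (r : seq I) (P : pred I) (F : I -> R) :
  (forall i, P i -> 0 <= F i)%R -> (0 <= \big[Rplus/0]_(i <- r | P i) F i)%R.
Proof. by move=> F_ge0; apply/RleP/sumr_ge0 => i /F_ge0/RleP. Qed.

Lemma mulR_sumr (I : Type) (r : seq I) (P : pred I) (F : I -> R) (c : R) :
  (c * \big[Rplus/0]_(i <- r | P i) F i = \big[Rplus/0]_(i <- r | P i) (c * F i))%R.
Proof. exact: mulr_sumr. Qed.

Lemma sumR_const (I : Type) (r : seq I) (c : R) :
  (\big[Rplus/0]_(i <- r) c = c * INR (size r))%R.
Proof.
elim: r => [|x r IH]; first by rewrite big_nil Rmult_0_r.
by rewrite big_cons IH (S_INR (size r)); ring.
Qed.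

Lemma prodR_ge0 (I : Type) (r : seq I) (P : pred I) (F : I -> R) :
  (forall i, P i -> 0 <= F i)%R -> (0 <= \big[Rmult/1]_(i <- r | P i) F i)%R.
Proof. by move=> F_ge0; apply/RleP/prodr_ge0 => i /F_ge0/RleP. Qed.

Lemma prodR_const (I : Type) (r : seq I) (c : R) :
  (\big[Rmult/1]_(i <- r) c = c ^ size r)%R.
Proof. by elim: r => [|x r IH]; rewrite ?big_nil // big_cons IH. Qed.

Lemma exists_le_mean (I : finType) (W F : I -> R) (i0 : I) :
  (forall i, 0 <= W i)%R -> (\big[Rplus/0]_i W i = 1)%R ->
  exists i, (F i <= \big[Rplus/0]_j (W j * F j))%R.
Proof.
move=> W_ge0 W_sum1.
have [i _ Fmin] := @Order.TotalTheory.arg_minP _ _ _ i0 predT F erefl.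
exists i; rewrite -[F i]Rmult_1_l -W_sum1 big_distrl /=.
by apply: sumR_le => j _ _; apply: Rmult_le_compat_l; [exact: W_ge0 | exact/RleP/Fmin].
Qed.

Lemma sumR_le_sub (I : finType) (s : seq I) (A : pred I) (F : I -> R) :
  uniq s -> {subset s <= A} -> (forall i, 0 <= F i)%R ->
  (\big[Rplus/0]_(i <- s) F i <= \big[Rplus/0]_(i in A) F i)%R.
Proof.
move=> s_uniq sA F_ge0; rewrite [X in (_ <= X)%R](bigID (mem s)) /=.
have -> : (\big[Rplus/0]_(i in A | i \in s) F i = \big[Rplus/0]_(i <- s) F i)%R.
  rewrite (big_uniq _ s_uniq); apply: eq_bigl => i.
  by case s_i: (i \in s); rewrite ?andbT ?andbF ?sA.
by rewrite -[X in (X <= _)%R]Rplus_0_r; apply: Rplus_le_compat_l; apply: sumR_ge0.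
Qed.

Definition b2R (b : bool) : R := if b then 1%R else 0%R.

Lemma b2R_ge0 b : (0 <= b2R b)%R.
Proof. by case: b => /=; lra. Qed.

Lemma card_b2R (T : finType) (A : {set T}) :
  INR #|A| = (\big[Rplus/0%R]_(x : T) b2R (x \in A))%R.
Proof.
rewrite -sum1_card big_mkcond (big_morph INR plus_INR (erefl (INR 0))).
by apply: eq_bigr => x _; case: (x \in A).
Qed.

Lemma sumR_const_card (T : finType) (c : R) :
  (\big[Rplus/0]_(x : T) c = c * INR #|T|)%R.
Proof.
rewrite -cardsT card_b2R mulR_sumr; apply: eq_bigr => x _.
by rewrite in_setT /=; ring.
Qed.

(* The weight [(1/2)^(k-1)] that a vertex of [S] at distance [k] contributes. *)
Definition dweight (k : nat) : R := (2 * (/ 2) ^ k)%R.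

Lemma dweight_gt0 k : (0 < dweight k)%R.
Proof. by apply: Rmult_lt_0_compat; [lra | apply: pow_lt; lra]. Qed.

Lemma dweightS k : dweight k.+1 = (dweight k / 2)%R.
Proof. by rewrite /dweight /=; field. Qed.

Lemma dweight_decr j k : j <= k -> (dweight k <= dweight j)%R.
Proof.
move=> /subnK <-; elim: (k - j) => [|m IH]; first by rewrite add0n; lra.
by rewrite addSn dweightS; have := dweight_gt0 (m + j); lra.
Qed.

Lemma dweight_pow2 k : (dweight k.+1 * 2 ^ k = 1)%R.
Proof.
rewrite /dweight /= -Rmult_assoc Rinv_r ?Rmult_1_l -?Rpow_mult_distr ?Rinv_l ?pow1 //.
all: lra.
Qed.

Lemma contrib_Some k : contrib (Some k) = dweight k.
Proof.
rewrite /contrib /dweight (_ : (Z.of_nat k - 1 = Z.of_nat k + (-1))%Z); last by lia.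
by rewrite powerRZ_add -?pow_powerRZ /=; [field | lra].
Qed.

Lemma contrib_ge0 o : (0 <= contrib o)%R.
Proof.
by case: o => [k|]; [rewrite contrib_Some; apply/Rlt_le/dweight_gt0 | apply: Rle_refl].
Qed.

Lemma gamma_e_le_card (T : finType) (e : rel T) (S : {set T}) :
  exp_dominating e S -> gamma_e e <= #|S|.
Proof.
move=> S_dom; rewrite /gamma_e leqNgt; apply/negP => /(before_find 0).
rewrite nth_iota ?ltnS ?max_card // add0n => /existsPn/(_ S); rewrite eqxx /=.
by move/forallPn => [u]; case: Rle_dec.
Qed.

Section SelfAvoidingPaths.

Variables (T : finType) (e : rel T).
Hypotheses (e_sym : symmetric e) (e_irr : irreflexive e).

(* A path from [u] is encoded by the list of its vertices after [u];
   [spaths u k] lists the self-avoiding paths of length [k]. *)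
Definition extensions (u : T) (t : seq T) : seq T :=
  enum [pred x | e (last u t) x && (x \notin u :: t)].

Fixpoint spaths (u : T) (k : nat) : seq (seq T) :=
  if k is k'.+1 then [seq rcons t x | t <- spaths u k', x <- extensions u t]
  else [:: [::]].
Arguments spaths : simpl never.

Lemma spaths0 u : spaths u 0 = [:: [::]].
Proof. by []. Qed.

Lemma spathsS u k :
  spaths u k.+1 = [seq rcons t x | t <- spaths u k, x <- extensions u t].
Proof. by []. Qed.

Lemma mem_spaths u k t :
  t \in spaths u k -> [/\ size t = k, path e u t & uniq (u :: t)].
Proof.
elim: k t => [|k IH] t; first by rewrite inE => /eqP ->.
case/allpairsPdep => t' [x [/IH[t'k t'path t'uniq] + ->]].
rewrite mem_enum inE => /andP[ex xt'].
by rewrite size_rcons t'k rcons_path t'path ex -rcons_cons rcons_uniq xt' t'uniq.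
Qed.

Lemma uniq_spaths u k : uniq (spaths u k).
Proof.
elim: k => [|k IH] //=; apply: allpairs_uniq_dep => // [t _|].
  exact: enum_uniq.
by move=> [t1 x1] [t2 x2] _ _ /= /rcons_inj[-> ->].
Qed.

Lemma cycle_of_paths (u z : T) (q1 q2 : seq T) :
  path e u (rcons q1 z) -> path e u (rcons q2 z) ->
  uniq (u :: rcons q1 z) -> uniq (u :: rcons q2 z) -> ~~ has (mem q2) q1 ->
  uniq (u :: rcons q1 z ++ rev q2) /\ cycle e (u :: rcons q1 z ++ rev q2).
Proof.
move=> path1 path2 uniq1 uniq2 disj; split.
  move: uniq1 uniq2; rewrite -!rcons_cons !rcons_uniq !in_cons !cons_uniq !negb_or.
  case/and3P=> /andP[zu zq1] uq1 uniq_q1 /and3P[/andP[_ zq2] uq2 uniq_q2].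
  rewrite mem_cat mem_rcons in_cons mem_rev eq_sym (negbTE zu) (negbTE uq1) (negbTE uq2) /=.
  rewrite cat_uniq rev_uniq rcons_uniq zq1 uniq_q1 uniq_q2 /= andbT.
  apply/hasPn => y; rewrite mem_rev mem_rcons inE => yq2.
  rewrite negb_or; apply/andP; split; first by apply: contraNneq zq2 => <-.
  by apply: contra disj => yq1; apply/hasP; exists y.
rewrite /cycle rcons_cat -rev_cons cat_path path1 last_rcons /=.
have := rev_path e u (rcons q2 z); rewrite last_rcons belast_rcons => ->.
by rewrite (eq_path (e' := e)) // => a b; rewrite /= e_sym.
Qed.

Variable g : nat.
Hypothesis e_girth : girth_at_least e g.

Lemma short_paths_head_eq (u x1 x2 : T) (r1 r2 : seq T) :
  size (x1 :: r1) + size (x2 :: r2) < g ->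
  path e u (x1 :: r1) -> uniq (u :: x1 :: r1) ->
  path e u (x2 :: r2) -> uniq (u :: x2 :: r2) ->
  last x1 r1 = last x2 r2 -> x1 = x2.
Proof.
move=> short path1 uniq1 path2 uniq2 same_end; apply/eqP/negPn/negP => x12.
(* [z] is the first vertex of the first path lying on the second one: the two
   prefixes ending at [z] close a cycle shorter than [g]. *)
have has_s2 : has (mem (x2 :: r2)) (x1 :: r1).
  by apply/hasP; exists (last x1 r1); [|rewrite /= same_end]; apply: mem_last.
pose i := find (mem (x2 :: r2)) (x1 :: r1); pose z := nth u (x1 :: r1) i.
pose j := index z (x2 :: r2).
have i_lt : i < size (x1 :: r1) by rewrite /i -has_find.
have z_s2 : z \in x2 :: r2 by apply: nth_find.
have j_lt : j < size (x2 :: r2) by rewrite /j index_mem.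
have take1 : take i.+1 (x1 :: r1) = rcons (take i (x1 :: r1)) z.
  by rewrite (take_nth u i_lt).
have take2 : take j.+1 (x2 :: r2) = rcons (take j (x2 :: r2)) z.
  by rewrite (take_nth u j_lt) nth_index.
pose c := u :: rcons (take i (x1 :: r1)) z ++ rev (take j (x2 :: r2)).
have [uniq_c cycle_c] : uniq c /\ cycle e c.
  apply: cycle_of_paths; rewrite -?take1 -?take2 ?take_path //.
  - by rewrite -[_ :: _]/(take i.+2 (u :: x1 :: r1)) take_uniq.
  - by rewrite -[_ :: _]/(take j.+2 (u :: x2 :: r2)) take_uniq.
  have : ~~ has (mem (x2 :: r2)) (take i (x1 :: r1)).
    by rewrite has_take_leq ?ltnn // ltnW.
  by apply: contra => /hasP[y y1 y2]; apply/hasP; exists y => //; apply: mem_take y2.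
have c_size : size c = (i + j).+2.
  by rewrite /c /= size_cat size_rcons size_rev !size_takel // ltnW.
have c_ge3 : 2 < size c.
  rewrite c_size !ltnS addn_gt0 !lt0n -negb_and; apply: contra x12.
  case/andP=> /eqP i0 /eqP; rewrite /j /z i0 /=.
  by case: eqP => // ->.
by have := e_girth uniq_c c_ge3 cycle_c; rewrite c_size; lia.
Qed.

Lemma short_paths_eq (u : T) (t1 t2 : seq T) :
  size t1 + size t2 < g ->
  path e u t1 -> uniq (u :: t1) -> path e u t2 -> uniq (u :: t2) ->
  last u t1 = last u t2 -> t1 = t2.
Proof.
elim: t1 u t2 => [|x1 r1 IH] u [|x2 r2] // short path1 uniq1 path2 uniq2 same_end.
- by move: same_end uniq2 => /= -> /andP[/negP[]]; apply: mem_last.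
- by move: same_end uniq1 => /= <- /andP[/negP[]]; apply: mem_last.
have x12 := short_paths_head_eq short path1 uniq1 path2 uniq2 same_end; subst x2.
congr (_ :: _); apply: (IH x1) => //.
- by move: short; rewrite /= addSn addnS => /ltnW/ltnW.
- by case/andP: path1.
- by case/andP: uniq1.
- by case/andP: path2.
- by case/andP: uniq2.
Qed.

Hypothesis e_cubic : forall x : T, #|[set y | e x y]| = 3.

Lemma size_extensions u t :
  size (extensions u t) = #|[pred x | e (last u t) x && (x \notin u :: t)]|.
Proof. by rewrite cardE. Qed.

Lemma size_extensions0 u : size (extensions u [::]) = 3.
Proof.
rewrite size_extensions -(e_cubic u); apply: eq_card => x; rewrite !inE /=.
by case: (eqVneq x u) => [->|]; rewrite ?e_irr ?andbT.
Qed.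

Lemma card_other_neighbours z y : e z y -> #|[set x | e z x] :\ y| = 2.
Proof. by move=> ezy; move: (cardsD1 y [set x | e z x]); rewrite inE ezy e_cubic => -[]. Qed.

Lemma size_extensions_le2 u t : t != [::] -> path e u t -> size (extensions u t) <= 2.
Proof.
case/lastP: t => [//|t z] _; rewrite rcons_path => /andP[_ ez].
rewrite size_extensions last_rcons -(@card_other_neighbours z (last u t)) 1?e_sym //.
apply/subset_leq_card/subsetP => x; rewrite !inE => /andP[zx xt]; rewrite zx andbT.
by apply: contraNneq xt => ->; rewrite mem_rcons in_cons orbCA -in_cons mem_last orbT.
Qed.

(* A neighbour of the endpoint other than its predecessor cannot lie on the
   path: the path would then contain a second, shorter path to the endpoint. *)
Lemma size_extensions_ge2 u t : t != [::] -> size t + size t < g ->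
  path e u t -> uniq (u :: t) -> 2 <= size (extensions u t).
Proof.
case/lastP: t => [//|t z] _ short path_tz uniq_tz.
have := path_tz; rewrite rcons_path => /andP[path_t ez].
rewrite size_extensions last_rcons -(@card_other_neighbours z (last u t)) 1?e_sym //.
apply/subset_leq_card/subsetP => x; rewrite !inE => /andP[x_prev zx]; rewrite zx /=.
rewrite mem_rcons in_cons orbCA -in_cons negb_or.
have -> : x != z by apply: contraTneq zx => ->; rewrite e_irr.
apply/negP => x_on; pose q := take (index x (u :: t)) t.
have q_end : last u q = x := last_take_index x_on.
have path_qz : path e u (rcons q z) by rewrite rcons_path take_path //= q_end e_sym.
have uniq_qz : uniq (u :: rcons q z).
  apply: subseq_uniq uniq_tz; rewrite -!cats1 -(cat1s u (q ++ _)) -(cat1s u (t ++ _)).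
  by apply: cat_subseq => //; apply: cat_subseq => //; apply: take_subseq.
have short_qz : size (rcons q z) + size (rcons t z) < g.
  by apply: leq_ltn_trans short; rewrite leq_add2r !size_rcons ltnS /q size_take_min geq_minr.
have same_end : last u (rcons q z) = last u (rcons t z) by rewrite !last_rcons.
have [qt] := rcons_inj (short_paths_eq short_qz path_qz uniq_qz path_tz uniq_tz same_end).
by move: x_prev; rewrite -q_end qt eqxx.
Qed.

Lemma size_spaths u k : size (spaths u k.+1) <= 3 * expn 2 k.
Proof.
elim: k => [|k IH]; first by rewrite spathsS /= size_cat size_map size_extensions0.
rewrite spathsS size_allpairs_dep sumnE big_map big_seq.
apply: (@leq_trans (\sum_(t <- spaths u k.+1 | t \in spaths u k.+1) 2)).
  apply: leq_sum => t t_in; have [tk path_t _] := mem_spaths t_in.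
  by apply: size_extensions_le2 path_t; rewrite -size_eq0 tk.
by rewrite -big_seq big_const_seq count_predT iter_addn_0 expnS mulnCA leq_mul2l IH orbT.
Qed.

Variable S : {set T}.

Definition avoids (t : seq T) : bool := all (fun x => x \notin S) t.

Definition hits (u : T) (t : seq T) : bool :=
  [&& t != [::], last u t \in S & avoids (behead (belast u t))].

Lemma avoids_rcons t x : avoids (rcons t x) = avoids t && (x \notin S).
Proof. by rewrite /avoids all_rcons andbC. Qed.

Lemma hits_rcons u t x : hits u (rcons t x) = (x \in S) && avoids t.
Proof. by case: t => [|y t]; rewrite /hits last_rcons belast_rcons. Qed.

Fixpoint spaths_upto (u : T) (k : nat) : seq (seq T) :=
  if k is k'.+1 then spaths_upto u k' ++ spaths u k else [::].

Lemma mem_spaths_upto u k t : t \in spaths_upto u k ->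
  [/\ 0 < size t <= k, path e u t & uniq (u :: t)].
Proof.
elim: k => [|k IH] //=; rewrite mem_cat.
case/orP=> [/IH[/andP[t_gt0 t_le] ? ?] | /mem_spaths[-> ? ?]].
  by rewrite t_gt0 (leq_trans t_le).
by rewrite leqnn.
Qed.

Lemma uniq_spaths_upto u k : uniq (spaths_upto u k).
Proof.
elim: k => [|k IH] //=; rewrite cat_uniq IH uniq_spaths andbT /=.
apply/hasPn => t /mem_spaths[tk _ _]; apply/negP => /mem_spaths_upto[].
by rewrite tk ltnn andbF.
Qed.

Definition n_avoiding (u : T) (k : nat) : R :=
  \big[Rplus/0%R]_(t <- spaths u k) b2R (avoids t).

Lemma n_avoiding_ge0 u k : (0 <= n_avoiding u k)%R.
Proof. by apply: sumR_ge0 => t _; apply: b2R_ge0. Qed.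

Definition hit_mass (u : T) (k : nat) : R :=
  \big[Rplus/0%R]_(t <- spaths_upto u k) (b2R (hits u t) * dweight (size t))%R.

Definition potential (u : T) (k : nat) : R := (hit_mass u k + dweight k * n_avoiding u k)%R.

Lemma potentialS u k : potential u k.+1 = (hit_mass u k + dweight k.+1 *
  \big[Rplus/0]_(t <- spaths u k) (b2R (avoids t) * INR (size (extensions u t))))%R.
Proof.
have split_ends :
    (\big[Rplus/0]_(t <- spaths u k) (b2R (avoids t) * INR (size (extensions u t)))
     = \big[Rplus/0]_(t <- spaths u k.+1) (b2R (avoids t) + b2R (hits u t)))%R.
  rewrite spathsS big_allpairs_dep; apply: eq_bigr => t _.
  rewrite -sumR_const; apply: eq_bigr => x _; rewrite avoids_rcons hits_rcons.
  by case: (avoids t); case: (x \in S) => /=; ring.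
rewrite split_ends /potential /hit_mass /n_avoiding [spaths_upto _ _.+1]/= big_cat /=.
rewrite Rplus_assoc mulR_sumr mulR_sumr; congr Rplus.
by rewrite -big_split; apply: eq_big_seq => t /mem_spaths[-> _ _] /=; ring.
Qed.

Lemma potential1 u : potential u 1 = 3%R.
Proof.
by rewrite potentialS spaths0 big_seq1 size_extensions0 /hit_mass big_nil /dweight /=; lra.
Qed.

(* Each avoiding path branches into at least two longer ones, and each of
   them carries half the weight. *)
Lemma potential_le_succ u k : 0 < k -> k.+1 + k.+1 <= g ->
  (potential u k <= potential u k.+1)%R.
Proof.
move=> k_gt0 kg; rewrite potentialS; apply: Rplus_le_compat_l.
have -> : dweight k = (dweight k.+1 * 2)%R by rewrite dweightS; field.
rewrite Rmult_assoc; apply: Rmult_le_compat_l; first exact/Rlt_le/dweight_gt0.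
rewrite /n_avoiding mulR_sumr; apply: sumR_le => t /mem_spaths[tk path_t uniq_t] _.
have t_nil : t != [::] by rewrite -size_eq0 tk -lt0n.
have short : size t + size t < g by rewrite tk; lia.
have /leP/le_INR ext_ge2 := size_extensions_ge2 t_nil short path_t uniq_t.
by case: (avoids t) => /=; rewrite /= in ext_ge2; lra.
Qed.

Lemma potential_ge3 u k : 0 < k -> k + k <= g -> (3 <= potential u k)%R.
Proof.
elim: k => [//|[|k] IH] _ kg; first by rewrite potential1; lra.
apply: Rle_trans (potential_le_succ _ _ kg) => //.
by apply: IH => //; lia.
Qed.

Lemma dweight_le_contrib u v k : has_adm_path e S u v k -> k < #|T| ->
  (dweight k <= contrib (distGS e S u v))%R.
Proof.
move=> adm k_lt; rewrite /distGS; set j := find _ _.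
have j_le : j <= k.
  by rewrite leqNgt; apply/negP => /(before_find 0); rewrite nth_iota // add0n adm.
by rewrite (leq_ltn_trans j_le k_lt) contrib_Some; apply: dweight_decr.
Qed.

Lemma hits_contrib u t : u \notin S -> path e u t -> uniq (u :: t) -> hits u t ->
  (dweight (size t) <= contrib (distGS e S u (last u t)))%R.
Proof.
move=> uS path_t uniq_t /and3P[t_nil tS t_avoids]; apply: dweight_le_contrib.
  apply/existsP; exists (in_tuple t).
  rewrite /admissible -[tval (in_tuple t)]/t path_t eqxx uniq_t -/(avoids _) t_avoids andbT /=.
  rewrite (_ : _ :&: S = [set last u t]) ?cards1 //.
  apply/setP => x; rewrite !inE.
  by case: eqP => [->|_]; case: eqP => [->|]; rewrite ?tS ?(negbTE uS).
by have := card_uniqP uniq_t; rewrite /= => <-; apply: max_card.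
Qed.

(* Below the girth, distinct hitting paths end at distinct vertices of [S]. *)
Lemma hit_mass_le_weight u k : u \notin S -> k + k < g ->
  (hit_mass u k <= weightGS e S u)%R.
Proof.
move=> uS kg; pose H := [seq t <- spaths_upto u k | hits u t].
have H_spec t : t \in H -> [/\ size t <= k, path e u t, uniq (u :: t) & hits u t].
  by rewrite mem_filter => /andP[hit /mem_spaths_upto[/andP[_ tk] ? ?]].
have -> : hit_mass u k = \big[Rplus/0%R]_(t <- H) dweight (size t).
  rewrite big_filter big_mkcond; apply: eq_bigr => t _.
  by case: (hits u t) => /=; ring.
apply: Rle_trans (_ : _ <= \big[Rplus/0%R]_(t <- H) contrib (distGS e S u (last u t)))%R _.
  by apply: sumR_le => t /H_spec[_ ? ? ?] _; apply: hits_contrib.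
rewrite -(big_map (last u) xpredT (fun v => contrib (distGS e S u v))).
apply: sumR_le_sub => [|v /mapP[t /H_spec[_ _ _ /and3P[_ ? _]] ->] //|v]; last first.
  exact: contrib_ge0.
rewrite map_inj_in_uniq ?filter_uniq ?uniq_spaths_upto //.
move=> t1 t2 /H_spec[t1k ? ? _] /H_spec[t2k ? ? _]; apply: short_paths_eq => //.
exact: leq_ltn_trans (leq_add t1k t2k) kg.
Qed.

Lemma weight_mem u : u \in S -> (2 <= weightGS e S u)%R.
Proof.
move=> uS; rewrite /weightGS (bigD1 u) //=.
have adm0 : has_adm_path e S u u 0.
  apply/existsP; exists (in_tuple [::]).
  by rewrite /admissible /= eqxx setUid andbT (setIidPl _) ?sub1set ?cards1.
have T_gt0 : 0 < #|T| by apply/card_gt0P; exists u.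
have := dweight_le_contrib adm0 T_gt0.
have : (0 <= \big[Rplus/0%R]_(v in S | v != u) contrib (distGS e S u v))%R.
  by apply: sumR_ge0 => v _; apply: contrib_ge0.
rewrite /dweight /=; lra.
Qed.

Lemma weight_notin u d : u \notin S -> 0 < d -> d + d < g ->
  (3 - dweight d * n_avoiding u d <= weightGS e S u)%R.
Proof.
move=> uS d_gt0 dg; have := potential_ge3 u d_gt0 (ltnW dg).
have := hit_mass_le_weight uS dg; rewrite /potential; lra.
Qed.

End SelfAvoidingPaths.

Lemma n_avoiding_le_sub (T : finType) (e : rel T) (X S : {set T}) u k :
  X \subset S -> (n_avoiding e S u k <= n_avoiding e X u k)%R.
Proof.
move=> XS; apply: sumR_le => t _ _; rewrite /avoids.
case S_t: (all _ t); case X_t: (all _ t) => /=; try lra.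
by move: X_t; rewrite (sub_all _ S_t) // => x; apply: contra; apply: (subsetP XS).
Qed.

Section BernoulliSubsets.

Variables (T : finType) (p : R).
Hypothesis p01 : (0 <= p <= 1)%R.

(* The probability of [X] when every vertex is put in [X] independently with
   probability [p]; sums against it are expectations. *)
Definition bernoulli (X : {set T}) : R :=
  \big[Rmult/1%R]_(x : T) (if x \in X then p else 1 - p)%R.

Lemma bernoulli_ge0 X : (0 <= bernoulli X)%R.
Proof. by apply: prodR_ge0 => x _; case: ifP => _; lra. Qed.

Lemma sum_bernoulli : (\big[Rplus/0]_(X : {set T}) bernoulli X = 1)%R.
Proof. by rewrite /bernoulli -(bigA_distr 1%R Rplus) big1 // => x _ /=; ring. Qed.

Lemma sum_bernoulli_mem x0 :
  (\big[Rplus/0]_(X : {set T}) (bernoulli X * b2R (x0 \in X)) = p)%R.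
Proof.
have factor X : (bernoulli X * b2R (x0 \in X))%R =
    \big[Rmult/1%R]_(x : T) (if x \in X then p else if x == x0 then 0 else 1 - p)%R.
  rewrite /bernoulli (bigD1 x0) //= [in RHS](bigD1 x0) //= eqxx.
  rewrite [in RHS](eq_bigr (fun x => if x \in X then p else 1 - p)%R) => [|x /negbTE->] //.
  by case: (x0 \in X) => /=; ring.
rewrite (eq_bigr _ (fun X _ => factor X)) -(bigA_distr 1%R Rplus) (bigD1 x0) //= eqxx.
by rewrite big1 => [|x /negbTE->]; ring.
Qed.

Lemma sum_bernoulli_card :
  (\big[Rplus/0]_(X : {set T}) (bernoulli X * INR #|X|) = p * INR #|T|)%R.
Proof.
rewrite (eq_bigr (fun X => \big[Rplus/0%R]_(x : T) (bernoulli X * b2R (x \in X)))%R);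
  last by move=> X _; rewrite card_b2R mulR_sumr.
rewrite exchange_big (eq_bigr (fun=> p)) => [|x _]; last exact: sum_bernoulli_mem.
by rewrite sumR_const_card.
Qed.

Lemma sum_bernoulli_avoids (t : seq T) : uniq t ->
  (\big[Rplus/0]_(X : {set T}) (bernoulli X * b2R (avoids X t)) = (1 - p) ^ size t)%R.
Proof.
move=> t_uniq.
have factor X : (bernoulli X * b2R (avoids X t))%R =
    \big[Rmult/1%R]_(x : T) (if x \in X then (if x \in t then 0 else p) else 1 - p)%R.
  case X_t: (avoids X t).
    rewrite Rmult_1_r; apply: eq_bigr => x _.
    by case: ifP => // xX; case: ifP => // /(allP X_t); rewrite xX.
  move/negbT: X_t => /allPn[x0 x0t]; rewrite negbK => x0X.
  by rewrite Rmult_0_r (bigD1 x0) //= x0X x0t; ring.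
rewrite (eq_bigr _ (fun X _ => factor X)) -(bigA_distr 1%R Rplus).
rewrite (eq_bigr (fun x => if x \in t then (1 - p)%R else 1%R)) => [|x _]; last first.
  by case: (x \in t) => /=; ring.
by rewrite -big_mkcond -big_uniq // prodR_const.
Qed.

End BernoulliSubsets.

Section Domination.

Variables (T : finType) (e : rel T).
Hypotheses (e_sym : symmetric e) (e_irr : irreflexive e).
Hypothesis e_cubic : forall x : T, #|[set y | e x y]| = 3.
Variable d : nat.
Hypotheses (d_gt0 : 0 < d) (e_girth : girth_at_least e (2 * d + 1)).

Definition avoid_weight (X : {set T}) (u : T) : R := (dweight d * n_avoiding e X u d)%R.

Lemma avoid_weight_ge0 (X : {set T}) (u : T) : (0 <= avoid_weight X u)%R.
Proof. by apply: Rmult_le_pos; [apply/Rlt_le/dweight_gt0 | apply: n_avoiding_ge0]. Qed.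

(* Adding to [X] the vertices of avoid weight above 2 yields an exponential
   dominating set, and there are at most half the total avoid weight of them. *)
Lemma gamma_e_le_avoid_weight (X : {set T}) :
  (INR (gamma_e e) <= INR #|X| + / 2 * \big[Rplus/0]_u avoid_weight X u)%R.
Proof.
pose Y := [set u | Rltb 2 (avoid_weight X u)].
have XY_dom : exp_dominating e (X :|: Y).
  move=> w; have [wS | wS] := boolP (w \in X :|: Y); first by have := weight_mem e wS; lra.
  have dg : d + d < 2 * d + 1 by lia.
  have := weight_notin e_sym e_irr e_girth e_cubic wS d_gt0 dg.
  have := n_avoiding_le_sub e w d (subsetUl X Y).
  move: wS; rewrite in_setU negb_or inE => /andP[_ /RltbP/Rnot_lt_le].
  have := dweight_gt0 d; rewrite /avoid_weight; nra.
have card_Y : (INR #|Y| <= / 2 * \big[Rplus/0]_u avoid_weight X u)%R.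
  rewrite card_b2R mulR_sumr; apply: sumR_le => u _ _; rewrite inE.
  have := avoid_weight_ge0 X u; case: RltbP => /=; lra.
have : gamma_e e <= #|X| + #|Y|.
  by apply: leq_trans (gamma_e_le_card XY_dom) _; rewrite cardsU leq_subr.
move/leP/le_INR; rewrite plus_INR; lra.
Qed.

Lemma mean_avoid_weight (p : R) (u : T) : (0 <= p <= 1)%R ->
  (\big[Rplus/0]_X (bernoulli p X * avoid_weight X u) <= 3 * (1 - p) ^ d)%R.
Proof.
move=> p01.
have -> : (\big[Rplus/0]_X (bernoulli p X * avoid_weight X u) = dweight d *
    \big[Rplus/0]_(t <- spaths e u d) \big[Rplus/0]_X (bernoulli p X * b2R (avoids X t)))%R.
  rewrite exchange_big mulR_sumr; apply: eq_bigr => X _.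
  rewrite /avoid_weight /n_avoiding -Rmult_assoc (Rmult_comm (bernoulli p X)) Rmult_assoc.
  by rewrite !mulR_sumr.
rewrite (eq_big_seq (fun=> (1 - p) ^ d)%R) => [|t /mem_spaths[<- _ /andP[_ t_uniq]]];
  last exact: sum_bernoulli_avoids.
case: d d_gt0 => [//|k] _; rewrite sumR_const.
have /leP/le_INR := size_spaths e_sym e_irr e_cubic u k.
rewrite mult_INR INR_expn => size_le.
replace (INR 2) with 2%R in size_le by (simpl; ring).
replace (INR 3) with 3%R in size_le by (simpl; ring).
have q_ge0 : (0 <= (1 - p) ^ k.+1)%R by apply: pow_le; lra.
apply: Rle_trans (_ : dweight k.+1 * ((1 - p) ^ k.+1 * (3 * 2 ^ k)) <= _)%R.
  by apply/Rmult_le_compat_l/Rmult_le_compat_l; [apply/Rlt_le/dweight_gt0 | |].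
rewrite (_ : dweight k.+1 * _ = 3 * (1 - p) ^ k.+1 * (dweight k.+1 * 2 ^ k))%R; last by ring.
by rewrite dweight_pow2 Rmult_1_r; apply: Rle_refl.
Qed.

Lemma mean_domination_bound (p : R) : (0 <= p <= 1)%R ->
  (\big[Rplus/0]_X (bernoulli p X *
     (INR #|X| + / 2 * \big[Rplus/0]_u avoid_weight X u))
   <= (p + 3 / 2 * (1 - p) ^ d) * INR #|T|)%R.
Proof.
move=> p01.
rewrite (eq_bigr (fun X => bernoulli p X * INR #|X| +
    / 2 * \big[Rplus/0]_u (bernoulli p X * avoid_weight X u))%R) => [|X _]; last first.
  by rewrite -mulR_sumr; ring.
rewrite big_split /= sum_bernoulli_card -mulR_sumr exchange_big /=.
set mass := (X in (_ + / 2 * X <= _)%R).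
have : (mass <= 3 * (1 - p) ^ d * INR #|T|)%R.
  by rewrite -sumR_const_card; apply: sumR_le => u _ _; apply: mean_avoid_weight.
set q := ((1 - p) ^ d)%R; set n := INR #|T|; nra.
Qed.

End Domination.

Theorem mainTheorem8 (d : nat) (p : R) (T : finType) (e : rel T) :
  (0 < d)%nat -> (0 <= p <= 1)%R ->
  simple_graph e -> cubic e -> girth_at_least e (2 * d + 1) ->
  (INR (gamma_e e) <= 3 / 2 * (p + exp (- (p * INR d))) * INR #|T|)%R.
Proof.
move=> d_gt0 p01 [e_irr e_sym] e_cubic e_girth.
pose F (X : {set T}) := (INR #|X| + / 2 * \big[Rplus/0]_u avoid_weight e d X u)%R.
have [X X_le_mean] := exists_le_mean F set0 (bernoulli_ge0 p01) (sum_bernoulli T p).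
have := gamma_e_le_avoid_weight e_sym e_irr e_cubic d_gt0 e_girth X.
have := mean_domination_bound e_sym e_irr e_cubic d_gt0 p01.
have := pow_one_minus_le_exp d p01; have := pos_INR #|T|.
rewrite /F in X_le_mean; nra.
Qed.
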